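(* Let $\mathbf V$ be a locally finite variety of monoids, let $A=\{a_1,\dots,a_d\}$ be a finite alphabet, let $\sim$ be the congruence on $A^*$ given by the identities of $\mathbf V$ (so $A^*/{\sim}$ is the free monoid in $\mathbf V$ over $A$), and let $\sim_1$ be the analogous congruence on $A^*$ for the variety of monoids corresponding to $\mathsf{BPol}_1(\mathcal V)$ (so $A^*/{\sim_1}$ is the free monoid over $A$ in that variety). Define $$\xi:A^*\to (A^*/{\sim}\ \Diamond\ A^*/{\sim})^d,\qquad u\mapsto(\mu_{a_1}(u),\dots,\mu_{a_d}(u)),$$ where each $\mu_{a_i}$ is built from $\varphi=\psi=$ the canonical projection $A^*\to A^*/{\sim}$. Then $\xi(A^* )$ is isomorphic to $A^*/{\sim_1}$. In particular, if $|A^*/{\sim}|=n$, then $|A^*/{\sim_1}|\leq n2^{dn^2}$.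
   Context: $\mathcal V$ denotes the variety of languages corresponding (via Eilenberg's correspondence) to the pseudovariety of finite monoids in $\mathbf V$: a language $L\subseteq A^*$ lies in $\mathcal V(A)$ iff its syntactic monoid belongs to $\mathbf V$. $\mathsf{BPol}_1(\mathcal V)(A)$ is the class of all Boolean combinations of languages $L_0$ and $L_0bL_1$ with $L_0,L_1\in\mathcal V(A)$, $b\in A$; it is a variety of languages, and $A^*/{\sim_1}$ is the free monoid over $A$ in the corresponding variety of monoids, i.e. the smallest monoid recognizing all languages of $\mathsf{BPol}_1(\mathcal V)(A)$. For finite monoids $M,N$, the Schützenberger product $M\Diamond N$ is the set of $2\times2$ matrices $P$ with $P_{1,1}\in M$, $P_{2,2}\in N$, $P_{2,1}=\emptyset$, $P_{1,2}\subseteq M\times N$, with multiplication $(PQ)_{1,1}=P_{1,1}Q_{1,1}$, $(PQ)_{2,2}=P_{2,2}Q_{2,2}$, $(PQ)_{1,2}=\{(P_{1,1}x,y)\mid (x,y)\in Q_{1,2}\}\cup\{(z,tQ_{2,2})\mid (z,t)\in P_{1,2}\}$. Given homomorphisms $\varphi:A^*\to M$, $\psi:A^*\to N$ and $b\in A$, $\mu_b:A^*\to M\Diamond N$ is defined by $(\mu_b(u))_{1,1}=\varphi(u)$, $(\mu_b(u))_{2,2}=\psi(u)$, $(\mu_b(u))_{1,2}=\{(\varphi(u'),\psi(u''))\mid u=u'bu'',\ u',u''\in A^*\}$. *)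

From mathcomp Require Import all_boot.
Set Implicit Arguments. Unset Strict Implicit. Unset Printing Implicit Defensive.

Record monoid_on (M : Type) := MonoidOn {
  m_mul : M -> M -> M;
  m_one : M;
  m_assoc : forall x y z, m_mul x (m_mul y z) = m_mul (m_mul x y) z;
  m_mul1 : forall x, m_mul m_one x = x;
  m_mulx1 : forall x, m_mul x m_one = x }.

Definition evalw (M : Type) (S : monoid_on M) (X : Type) (h : X -> M) (w : seq X) : M :=
  foldr (fun x m => m_mul S (h x) m) (m_one S) w.

(* An identity is a pair of words over the variables nat; a variety of monoids
   is given by a set E of identities: its members are the monoids satisfying E. *)
Definition identity := (seq nat * seq nat)%type.

Definition sat_identity (M : Type) (S : monoid_on M) (e : identity) : Prop :=
  forall h : nat -> M, evalw S h e.1 = evalw S h e.2.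

Definition in_variety (E : identity -> Prop) (M : Type) (S : monoid_on M) : Prop :=
  forall e, E e -> sat_identity S e.

(* u ~ v : the identity u = v (letters of A used as variables) holds in V,
   i.e. in every monoid of V under every assignment A -> M. *)
Definition simV (E : identity -> Prop) (A : Type) (u v : seq A) : Prop :=
  forall (M : Type) (S : monoid_on M), in_variety E S ->
    forall h : A -> M, evalw S h u = evalw S h v.

Definition locally_finite (E : identity -> Prop) : Prop :=
  forall n : nat, exists s : seq (seq 'I_n),
    forall w : seq 'I_n, exists2 w', w' \in s & simV E w w'.

Definition language (A : Type) := seq A -> Prop.

Definition synt (A : Type) (L : language A) (u v : seq A) : Prop :=
  forall x y : seq A, L (x ++ u ++ y) <-> L (x ++ v ++ y).

Definition substw (A : Type) (s : nat -> seq A) (w : seq nat) : seq A :=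
  flatten (map s w).

(* L in V(A): the syntactic monoid A^*/synt L belongs to V, i.e. satisfies
   every identity of E (an assignment of the variables into A^*/synt L is the
   same as a choice of representatives s : nat -> A^*.) *)
Definition in_calV (E : identity -> Prop) (A : Type) (L : language A) : Prop :=
  forall e, E e -> forall s : nat -> seq A, synt L (substw s e.1) (substw s e.2).

Definition mprod (A : Type) (L0 : language A) (b : A) (L1 : language A) : language A :=
  fun w => exists w0 w1, w = w0 ++ b :: w1 /\ L0 w0 /\ L1 w1.

Inductive boolcomb (A : Type) (G : language A -> Prop) : language A -> Prop :=
  | bc_gen L : G L -> boolcomb G L
  | bc_compl L : boolcomb G L -> boolcomb G (fun w => ~ L w)
  | bc_inter L K : boolcomb G L -> boolcomb G K -> boolcomb G (fun w => L w /\ K w)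
  | bc_union L K : boolcomb G L -> boolcomb G K -> boolcomb G (fun w => L w \/ K w).

Definition BPol1_gen (E : identity -> Prop) (A : Type) (L : language A) : Prop :=
  in_calV E L \/
  exists L0 L1 b, in_calV E L0 /\ in_calV E L1 /\ L = mprod L0 b L1.

Definition BPol1 (E : identity -> Prop) (A : Type) : language A -> Prop :=
  boolcomb (BPol1_gen E (A:=A)).

(* u ~1 v : u and v are identified in the smallest monoid recognizing all
   languages of BPol1(V)(A), i.e. by the intersection of their syntactic
   congruences. *)
Definition sim1 (E : identity -> Prop) (A : Type) (u v : seq A) : Prop :=
  forall L, BPol1 E L -> synt L u v.

(* An element of M <> N: entries (1,1) in M, (2,2) in N, (1,2) a subset of
   M x N (entry (2,1) is always empty and is omitted). *)
Record schutz (M N : Type) := Schutz {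
  s11 : M; s22 : N; s12 : M * N -> Prop }.

Definition schutz_mul (M N : Type) (SM : monoid_on M) (SN : monoid_on N)
  (P Q : schutz M N) : schutz M N :=
  {| s11 := m_mul SM (s11 P) (s11 Q);
     s22 := m_mul SN (s22 P) (s22 Q);
     s12 := fun p => (exists x y, s12 Q (x, y) /\ p = (m_mul SM (s11 P) x, y)) \/
                     (exists z t, s12 P (z, t) /\ p = (z, m_mul SN t (s22 Q))) |}.

Definition mu (A M N : Type) (phi : seq A -> M) (psi : seq A -> N) (b : A) (u : seq A)
  : schutz M N :=
  {| s11 := phi u; s22 := psi u;
     s12 := fun p => exists u' u'', u = u' ++ b :: u'' /\ p = (phi u', psi u'') |}.

(* A^*/~ : the ~-class of u, as a subset of A^* (canonical projection). *)
Definition clsV (E : identity -> Prop) (A : Type) (u : seq A) : seq A -> Prop :=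
  fun v => simV E u v.

Definition xi (E : identity -> Prop) (A : Type) (u : seq A)
  : A -> schutz (seq A -> Prop) (seq A -> Prop) :=
  fun b => mu (clsV E (A:=A)) (clsV E (A:=A)) b u.

Definition pairwise_unrelated (A : Type) (R : seq A -> seq A -> Prop) (s : seq (seq A)) :=
  forall i j, i < size s -> j < size s -> i <> j -> ~ R (nth [::] s i) (nth [::] s j).

Definition nclasses (A : Type) (R : seq A -> seq A -> Prop) (n : nat) : Prop :=
  exists s : seq (seq A), size s = n /\ pairwise_unrelated R s /\
    forall w, exists2 i, i < size s & R w (nth [::] s i).

Definition atmost_classes (A : Type) (R : seq A -> seq A -> Prop) (N : nat) : Prop :=
  forall s : seq (seq A), pairwise_unrelated R s -> size s <= N.

From mathcomp Require Import all_boot.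
From Stdlib Require Import FunctionalExtensionality PropExtensionality.
From Stdlib Require Import ProofIrrelevance ClassicalEpsilon.

Set Implicit Arguments. Unset Strict Implicit. Unset Printing Implicit Defensive.

(* u ~1 v holds iff u ~ v and every factorisation u = u' b u'' is matched by a
   factorisation v = v' b v'' with u' ~ v' and u'' ~ v'', and conversely.
   Necessity: ~-classes belong to V(A), and marked products of two ~-classes
   separate words violating the condition. Sufficiency: ~ is the least congruence
   containing the instances of the identities of V, so it refines the syntactic
   congruence of every L in V(A); a marked product L0 b L1 of such languages is
   then stable under the replacement of a factor u by such a v, and Boolean
   combinations preserve this. The condition says precisely that xi u = xi v:
   the (1,1) entries record the ~-class and the (1,2) entry of the b-component
   records the pairs of classes of the b-factorisations. Replacing ~-classes by
   indices in [0, n) turns xi u into an element of 'I_n * ('I_n^2 -> bool)^A. *)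

Lemma evalw_cat (M : Type) (S : monoid_on M) (X : Type) (h : X -> M) (u v : seq X) :
  evalw S h (u ++ v) = m_mul S (evalw S h u) (evalw S h v).
Proof. by elim: u => [|x u IHu] /=; rewrite ?m_mul1 // IHu m_assoc. Qed.

Lemma evalw_substw (M : Type) (S : monoid_on M) (X : Type) (h : X -> M)
    (s : nat -> seq X) (w : seq nat) :
  evalw S h (substw s w) = evalw S (fun i => evalw S h (s i)) w.
Proof. by elim: w => [|i w IHw] //=; rewrite /substw /= evalw_cat -IHw. Qed.

Lemma flatten_map_seq1 (A : Type) (w : seq A) : flatten (map (fun a => [:: a]) w) = w.
Proof. by elim: w => //= a w ->. Qed.

Section QuotientMonoid.
Variables (A : Type) (R : seq A -> seq A -> Prop).
Hypotheses (R_refl : forall u, R u u) (R_sym : forall u v, R u v -> R v u)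
  (R_trans : forall u v w, R u v -> R v w -> R u w).

Lemma class_eq (u v : seq A) : R u = R v <-> R u v.
Proof.
split=> [Ruv | Ruv]; first by rewrite Ruv.
apply: functional_extensionality => w; apply: propositional_extensionality.
by split=> [Ruw | Rvw]; [apply: R_trans (R_sym Ruv) Ruw | apply: R_trans Ruv Rvw].
Qed.

Hypothesis R_cat : forall u u' v v', R u u' -> R v v' -> R (u ++ v) (u' ++ v').

Definition qclass := {P : seq A -> Prop | exists w, P = R w}.

Definition qcls (w : seq A) : qclass := exist _ (R w) (ex_intro _ w erefl).

Definition qrep (q : qclass) : seq A :=
  proj1_sig (constructive_indefinite_description _ (proj2_sig q)).

Lemma qcls_eq (u v : seq A) : qcls u = qcls v <-> R u v.
Proof.
rewrite -class_eq; split=> [/(congr1 (@proj1_sig _ _)) // | Ruv].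
by apply: eq_sig_hprop => [P p q|]; first exact: proof_irrelevance.
Qed.

Lemma qrepK (q : qclass) : qcls (qrep q) = q.
Proof.
apply: eq_sig_hprop => [P p p'|]; first exact: proof_irrelevance.
rewrite /qrep; case: constructive_indefinite_description => w /= ->.
by rewrite /qcls.
Qed.

Definition qmul (p q : qclass) : qclass := qcls (qrep p ++ qrep q).

Lemma qmul_cls (u v : seq A) : qmul (qcls u) (qcls v) = qcls (u ++ v).
Proof. by apply/qcls_eq; apply: R_cat; apply/qcls_eq; rewrite qrepK. Qed.

Lemma qmulA (p q r : qclass) : qmul p (qmul q r) = qmul (qmul p q) r.
Proof. by rewrite -[p]qrepK -[q]qrepK -[r]qrepK !qmul_cls catA. Qed.

Lemma qmul1 (q : qclass) : qmul (qcls [::]) q = q.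
Proof. by rewrite -[q]qrepK qmul_cls. Qed.

Lemma qmulq1 (q : qclass) : qmul q (qcls [::]) = q.
Proof. by rewrite -[q]qrepK qmul_cls cats0. Qed.

Definition quotient_monoid : monoid_on qclass := MonoidOn qmulA qmul1 qmulq1.

Lemma evalw_qcls (X : Type) (s : X -> seq A) (w : seq X) :
  evalw quotient_monoid (fun x => qcls (s x)) w = qcls (flatten (map s w)).
Proof. by elim: w => [|x w IHw] //=; rewrite IHw qmul_cls. Qed.

Lemma quotient_in_variety (E : identity -> Prop) :
  (forall e (s : nat -> seq A), E e -> R (substw s e.1) (substw s e.2)) ->
  in_variety E quotient_monoid.
Proof.
move=> RE e Ee h; have -> : h = fun i => qcls (qrep (h i)).
  by apply: functional_extensionality => i; rewrite qrepK.
by rewrite !evalw_qcls; apply/qcls_eq/RE.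
Qed.

(* The identities of V hold in A^*/R, so the letter assignment a |-> [a]
   separates u and v unless R u v. *)
Lemma simV_sub_congruence (E : identity -> Prop) (u v : seq A) :
  (forall e (s : nat -> seq A), E e -> R (substw s e.1) (substw s e.2)) ->
  simV E u v -> R u v.
Proof.
move=> RE /(_ _ _ (quotient_in_variety RE) (fun a => qcls [:: a])).
by rewrite !evalw_qcls !flatten_map_seq1 => /qcls_eq.
Qed.

End QuotientMonoid.

Section VarietyCongruence.
Variables (E : identity -> Prop) (A : Type).

Lemma simV_refl (u : seq A) : simV E u u. Proof. by []. Qed.

Lemma simV_sym (u v : seq A) : simV E u v -> simV E v u.
Proof. by move=> Huv M S SV h; rewrite Huv. Qed.

Lemma simV_trans (u v w : seq A) : simV E u v -> simV E v w -> simV E u w.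
Proof. by move=> Huv Hvw M S SV h; rewrite Huv ?Hvw. Qed.

Lemma clsV_eq (u v : seq A) : clsV E u = clsV E v <-> simV E u v.
Proof. exact: class_eq simV_refl simV_sym simV_trans u v. Qed.

Lemma simV_instance e (s : nat -> seq A) (x y : seq A) :
  E e -> simV E (x ++ substw s e.1 ++ y) (x ++ substw s e.2 ++ y).
Proof. by move=> Ee M S SV h; rewrite !evalw_cat !evalw_substw SV. Qed.

Lemma clsV_in_calV (u : seq A) : in_calV E (clsV E u).
Proof.
move=> e Ee s x y; split=> Hu; first exact: simV_trans Hu (simV_instance s x y Ee).
exact: simV_trans Hu (simV_sym (simV_instance s x y Ee)).
Qed.

Lemma synt_cat (L : language A) (u u' v v' : seq A) :
  synt L u u' -> synt L v v' -> synt L (u ++ v) (u' ++ v').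
Proof.
move=> Hu Hv x y; rewrite -!catA (Hu x (v ++ y)).
by have := Hv (x ++ u') y; rewrite -!catA.
Qed.

Lemma in_calV_synt (L : language A) (u v : seq A) :
  in_calV E L -> simV E u v -> synt L u v.
Proof.
move=> LV; apply: (simV_sub_congruence _ _ _ (@synt_cat L)) => [w x y | w w' Hww' x y |
  w w' w'' H1 H2 x y | e s Ee] //.
- by rewrite Hww'.
- by rewrite H1 H2.
- exact: LV.
Qed.

End VarietyCongruence.

Lemma cat_eq_cat_cons (A : Type) (a c w0 w1 : seq A) (b : A) :
  a ++ c = w0 ++ b :: w1 ->
  (exists a', a = w0 ++ b :: a' /\ w1 = a' ++ c) \/
  (exists c0, c = c0 ++ b :: w1 /\ w0 = a ++ c0).
Proof.
elim: a w0 => [|x a IHa] w0 /=; first by move=> ->; right; exists w0.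
case: w0 => [|y w0] /= [<- Hr]; first by left; exists a.
by have [[a' [-> ->]] | [c0 [-> ->]]] := IHa _ Hr; [left; exists a' | right; exists c0].
Qed.

Section MarkedProducts.
Variables (E : identity -> Prop) (A : Type).

Definition factor_sim (u v : seq A) := forall b u' u'', u = u' ++ b :: u'' ->
  exists v' v'', v = v' ++ b :: v'' /\ simV E u' v' /\ simV E u'' v''.

Definition sim_marked (u v : seq A) :=
  [/\ simV E u v, factor_sim u v & factor_sim v u].

Lemma mprod_factor_sim (L0 L1 : language A) (b : A) (u v x y : seq A) :
  in_calV E L0 -> in_calV E L1 -> simV E u v -> factor_sim u v ->
  mprod L0 b L1 (x ++ u ++ y) -> mprod L0 b L1 (x ++ v ++ y).
Proof.
move=> L0V L1V Huv Fuv [w0 [w1 [Hxuy [Lw0 Lw1]]]].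
have [[x' [Hx Hw1]] | [c [Huy Hw0]]] := cat_eq_cat_cons Hxuy.
  exists w0, (x' ++ v ++ y); split; first by rewrite Hx -catA.
  by split=> //; apply/(in_calV_synt L1V Huv x' y); rewrite -Hw1.
have [[u' [Hu Hw1]] | [y0 [Hy Hc]]] := cat_eq_cat_cons Huy.
  have [v' [v'' [Hv [Hu' Hu'']]]] := Fuv _ _ _ Hu.
  exists (x ++ v'), (v'' ++ y); split; first by rewrite Hv -!catA.
  split; first by have := in_calV_synt L0V Hu' x [::]; rewrite !cats0 -Hw0 => <-.
  by apply/(in_calV_synt L1V Hu'' [::] y); rewrite -Hw1.
exists (x ++ v ++ y0), w1; split; first by rewrite Hy -!catA.
by split=> //; apply/(in_calV_synt L0V Huv x y0); rewrite -Hc -Hw0.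
Qed.

Lemma sim_marked_sim1 (u v : seq A) : sim_marked u v -> sim1 E u v.
Proof.
move=> [Huv Fuv Fvu] L; elim=> {L} [L [LV | [L0 [L1 [b [L0V [L1V ->]]]]]] | L _ IH |
  L K _ IHL _ IHK | L K _ IHL _ IHK] x y.
- exact: in_calV_synt LV Huv x y.
- by split; apply: mprod_factor_sim => //; apply: simV_sym.
- by have := IH x y; tauto.
- by have := IHL x y; have := IHK x y; tauto.
- by have := IHL x y; have := IHK x y; tauto.
Qed.

Lemma sim1_factor_sim (u v : seq A) : sim1 E u v -> factor_sim u v.
Proof.
move=> Huv b u' u'' Hu.
have LV : BPol1 E (mprod (clsV E u') b (clsV E u'')).
  apply: bc_gen; right; exists (clsV E u'), (clsV E u''), b.
  by do 2 (split; first exact: clsV_in_calV).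
have [/= v' [v'' [Hv [Hu' Hu'']]]] : mprod (clsV E u') b (clsV E u'') v.
  by have := Huv _ LV [::] [::]; rewrite /= !cats0 => <-; exists u', u''.
by exists v', v''.
Qed.

Lemma sim1E (u v : seq A) : sim1 E u v <-> sim_marked u v.
Proof.
split=> [Huv | ]; last exact: sim_marked_sim1.
have Hvu : sim1 E v u by move=> L LV x y; rewrite (Huv L LV x y).
split; [| exact: sim1_factor_sim | exact: sim1_factor_sim].
have := Huv _ (bc_gen (or_introl (clsV_in_calV (E := E) u))) [::] [::].
by rewrite /= !cats0 => -[+ _]; apply.
Qed.

Lemma xi_factor_sim (u v : seq A) : xi E u = xi E v -> factor_sim u v.
Proof.
move=> Huv b u' u'' Hu.
have : s12 (xi E u b) (clsV E u', clsV E u'') by exists u', u''.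
rewrite Huv => -[v' [v'' [Hv [/clsV_eq Hu' /clsV_eq Hu'']]]].
by exists v', v''.
Qed.

Lemma factor_sim_s12 (u v : seq A) (b : A) p :
  factor_sim u v -> s12 (xi E u b) p -> s12 (xi E v b) p.
Proof.
move=> Fuv [u' [u'' [/Fuv [v' [v'' [Hv [/clsV_eq-> /clsV_eq->]]]] ->]]].
by exists v', v''.
Qed.

(* Entry (1,1) of every component of xi u is the ~-class of u; the alphabet may be
   empty, but a component exists as soon as u or v has a first letter. *)
Lemma xi_eqE (u v : seq A) : xi E u = xi E v <-> sim_marked u v.
Proof.
split=> [Huv | [Huv Fuv Fvu]].
  split; [| exact: xi_factor_sim | exact: xi_factor_sim].
  have diag (b : A) : simV E u v.
    by apply/clsV_eq; exact (congr1 (fun f => s11 (f b)) Huv).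
  case: u v {Huv} diag => [|a u] [|a' v] diag; first exact: simV_refl.
  - exact: diag a'.
  - exact: diag a.
  - exact: diag a.
move/clsV_eq: Huv => Huv; apply: functional_extensionality => b.
rewrite /xi /mu Huv; congr Schutz.
apply: functional_extensionality => p; apply: propositional_extensionality.
by split; apply: factor_sim_s12.
Qed.

End MarkedProducts.

Lemma atmost_classes_code (A : Type) (T : finType) (R : seq A -> seq A -> Prop)
    (code : seq A -> T) :
  (forall u v, code u = code v -> R u v) -> atmost_classes R #|T|.
Proof.
move=> codeR s Rs; have code_uniq : uniq (map code s).
  apply/(uniqP (code [::])) => i j; rewrite !inE size_map => Hi Hj.
  rewrite !(nth_map [::]) // => Hij; case: (eqVneq i j) => // /eqP ne_ij.
  by case: (Rs i j Hi Hj ne_ij); apply: codeR.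
by rewrite -(size_map code) -(card_uniqP code_uniq) max_card.
Qed.

Lemma nclasses_index (A : Type) (R : seq A -> seq A -> Prop) (n : nat) :
  (forall u v, R u v -> R v u) -> (forall u v w, R u v -> R v w -> R u w) ->
  nclasses R n -> exists idx : seq A -> 'I_n, forall u v, idx u = idx v -> R u v.
Proof.
move=> R_sym R_trans [r [<- [_ r_cover]]].
have r_idx w : {i : 'I_(size r) | R w (nth [::] r i)}.
  apply: constructive_indefinite_description.
  by have [i lt_i Rw] := r_cover w; exists (Ordinal lt_i).
exists (fun w => sval (r_idx w)) => u v Euv.
by apply: R_trans (svalP (r_idx u)) _; rewrite Euv; apply: R_sym (svalP (r_idx v)).
Qed.

Definition classicb (P : Prop) : bool := is_left (excluded_middle_informative P).

Lemma classicbP (P : Prop) : reflect P (classicb P).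
Proof. by rewrite /classicb; case: excluded_middle_informative => /= HP; constructor. Qed.

Lemma card_set_type (T : finType) : #|{: {set T}}| = 2 ^ #|T|.
Proof. by rewrite -[LHS]cardsT -powersetT card_powerset cardsT. Qed.

Lemma card_xi_code_type (A : finType) (n : nat) :
  #|{: 'I_n * {ffun A -> {set 'I_n * 'I_n}}}| = n * 2 ^ (#|A| * n ^ 2).
Proof.
rewrite card_prod card_ord card_ffun card_set_type card_prod card_ord -expnM.
by rewrite [#|A| * _]mulnC mulnn.
Qed.

Section Coding.
Variables (E : identity -> Prop) (A : finType) (n : nat) (idx : seq A -> 'I_n).
Hypothesis idx_simV : forall u v, idx u = idx v -> simV E u v.

Definition xi_code (u : seq A) : 'I_n * {ffun A -> {set 'I_n * 'I_n}} :=
  (idx u, [ffun b => [set p | classicb (exists u' u'',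
     u = u' ++ b :: u'' /\ (idx u', idx u'') = p)]]).

Lemma xi_code_factor_sim (u v : seq A) :
  (xi_code u).2 = (xi_code v).2 -> factor_sim E u v.
Proof.
move=> Euv b u' u'' Hu.
have : (idx u', idx u'') \in (xi_code u).2 b.
  by rewrite ffunE inE; apply/classicbP; exists u', u''.
rewrite Euv ffunE inE => /classicbP [v' [v'' [Hv [/esym/idx_simV Hu' /esym/idx_simV Hu'']]]].
by exists v', v''.
Qed.

Lemma xi_code_sim_marked (u v : seq A) : xi_code u = xi_code v -> sim_marked E u v.
Proof.
move=> Euv; split; first exact/idx_simV/(congr1 fst Euv).
  by apply: xi_code_factor_sim; rewrite Euv.
by apply: xi_code_factor_sim; rewrite Euv.
Qed.

End Coding.

Theorem proposition7 (E : identity -> Prop) (A : finType) :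
  locally_finite E ->
  (forall u v : seq A, xi E u = xi E v <-> sim1 E u v) /\
  (forall n : nat, nclasses (simV E (A:=A)) n ->
     atmost_classes (sim1 E (A:=A)) (n * 2 ^ (#|A| * n ^ 2))).
Proof.
move=> _; split=> [u v | n classes_n].
  exact: iff_trans (xi_eqE E u v) (iff_sym (sim1E E u v)).
have [idx idx_simV] := nclasses_index (@simV_sym E A) (@simV_trans E A) classes_n.
rewrite -(card_xi_code_type A n); apply: (atmost_classes_code (code := xi_code idx)).
by move=> u v /(xi_code_sim_marked idx_simV)/sim1E.
Qed.
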